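(* Let $p\ge 2$ and $\delta>0$. Define $$\mathcal{G}_\delta(t):=\int_0^t\frac{s(s+\delta)^{\frac{p-2}{2}}}{\sqrt{1+\delta+s^2}}\,ds\quad(t\ge0),\qquad H_{\frac p2}(\xi)=\begin{cases}(|\xi|-1)_+^{\frac p2}\frac{\xi}{|\xi|}&\xi\ne0,\\ 0&\xi=0.\end{cases}$$ Then there is a constant $c_p>0$ depending only on $p$ such that for all $\xi,\eta\in\mathbb{R}^n$, $$\left|\mathcal{G}_\delta\left((|\xi|-\delta-1)_+\right)-\mathcal{G}_\delta\left((|\eta|-\delta-1)_+\right)\right|^2\le c_p\left|H_{\frac p2}(\xi)-H_{\frac p2}(\eta)\right|^2.$$
   Context: $(\cdot)_+$ denotes the positive part; $|\cdot|$ is the Euclidean norm. *)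

From HB Require Import structures.
From mathcomp Require Import all_boot all_order all_algebra.
From mathcomp Require Import all_classical all_reals all_analysis.
Set Implicit Arguments. Unset Strict Implicit. Unset Printing Implicit Defensive.
Import Order.TTheory GRing.Theory Num.Theory.
Local Open Scope ring_scope.
Local Open Scope classical_set_scope.

Definition pos_part {R : realType} (x : R) : R := Num.max x 0.

Definition enorm {R : realType} {n : nat} (v : 'rV[R]_n) : R :=
  Num.sqrt (\sum_(i < n) v ord0 i ^+ 2).

Definition Gdelta {R : realType} (p delta t : R) : R :=
  (\int[lebesgue_measure]_(s in `[0, t]) 
      (s * powR (s + delta) ((p - 2) / 2) / Num.sqrt (1 + delta + s ^+ 2)))%R.

Definition Hp2 {R : realType} {n : nat} (p : R) (xi : 'rV[R]_n) : 'rV[R]_n :=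
  if xi == 0 then 0
  else (powR (pos_part (enorm xi - 1)) (p / 2) / enorm xi) *: xi.

From HB Require Import structures.
From mathcomp Require Import all_boot all_order all_algebra.
From mathcomp Require Import all_classical all_reals all_analysis.
From mathcomp Require Import measurable_realfun ring lra.
Import Order.TTheory GRing.Theory Num.Theory.
Local Open Scope ring_scope.

(** Since [s <= sqrt (1 + delta + s^2)], the integrand of [G_delta] is at most
    [(s + delta)^((p-2)/2)], so for [t' <= t]
    [G_delta t - G_delta t' <= (t - t') (t + delta)^((p-2)/2)
                            <= (t + delta)^(p/2) - (t' + delta)^(p/2)].
    For [t = (a - delta - 1)_+] with [a >= 1 + delta] one has [t + delta = a - 1],
    and always [(b - 1)_+ <= (b - delta - 1)_+ + delta]; hence the increment of
    [G_delta] is dominated by that of the radial profile [a |-> (a - 1)_+^(p/2)],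
    which is [|H_(p/2)|]. The reverse triangle inequality
    [| |H xi| - |H eta| | <= |H xi - H eta|] concludes, with [c_p = 1]. *)

Lemma Lagrange_identity {R : comNzRingType} {k : nat} (u v : 'I_k -> R) :
  \sum_i \sum_j (u i * v j - u j * v i) ^+ 2 =
  2 * ((\sum_i u i ^+ 2) * (\sum_j v j ^+ 2) - (\sum_i u i * v i) ^+ 2).
Proof.
have sum_prod (a b : 'I_k -> R) :
    \sum_i \sum_j a i * b j = (\sum_i a i) * (\sum_j b j).
  by rewrite mulr_suml; apply: eq_bigr => i _; rewrite mulr_sumr.
have expand i j : (u i * v j - u j * v i) ^+ 2 =
    u i ^+ 2 * v j ^+ 2 + v i ^+ 2 * u j ^+ 2 - 2 * (u i * v i) * (u j * v j).
  by ring.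
under eq_bigr do under eq_bigr do rewrite expand.
under eq_bigr do rewrite sumrB big_split.
rewrite sumrB big_split /= !sum_prod -mulr_sumr.
ring.
Qed.

Lemma sum_sqr_ge0 {R : realDomainType} {k : nat} (a : 'I_k -> R) : 0 <= \sum_i a i ^+ 2.
Proof. by apply: sumr_ge0 => i _; apply: sqr_ge0. Qed.

Lemma Cauchy_Schwarz_sum {R : rcfType} {k : nat} (u v : 'I_k -> R) :
  \sum_i u i * v i <= Num.sqrt (\sum_i u i ^+ 2) * Num.sqrt (\sum_i v i ^+ 2).
Proof.
rewrite -sqrtrM ?sum_sqr_ge0 //.
apply: le_trans (ler_norm _) _; rewrite -sqrtr_sqr; apply: ler_wsqrtr.
have : 0 <= \sum_i \sum_j (u i * v j - u j * v i) ^+ 2.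
  by apply: sumr_ge0 => i _; apply: sum_sqr_ge0.
rewrite Lagrange_identity; lra.
Qed.

Section EuclideanNorm.
Context {R : realType} {n : nat}.
Implicit Types u v : 'rV[R]_n.

Lemma enorm_ge0 u : 0 <= enorm u.
Proof. exact: sqrtr_ge0. Qed.

Lemma sqr_enorm u : enorm u ^+ 2 = \sum_i u ord0 i ^+ 2.
Proof. by rewrite sqr_sqrtr ?sum_sqr_ge0. Qed.

Lemma enormZ (c : R) u : enorm (c *: u) = `|c| * enorm u.
Proof.
rewrite /enorm; under eq_bigr do rewrite mxE exprMn.
by rewrite -mulr_sumr sqrtrM ?sqr_ge0 // sqrtr_sqr.
Qed.

Lemma enorm0 : enorm (0 : 'rV[R]_n) = 0.
Proof. by rewrite -(scale0r (0 : 'rV[R]_n)) enormZ normr0 mul0r. Qed.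

Lemma ler_dist_enorm u v : `|enorm u - enorm v| <= enorm (u - v).
Proof.
rewrite -(ler_sqr (normr_ge0 _) (enorm_ge0 _)) real_normK ?num_real //.
have -> : enorm (u - v) ^+ 2 =
    enorm u ^+ 2 + enorm v ^+ 2 - 2 * \sum_i u ord0 i * v ord0 i.
  rewrite !sqr_enorm mulr_sumr -big_split -sumrB.
  by apply: eq_bigr => i _; rewrite !mxE /=; ring.
have := Cauchy_Schwarz_sum (u ord0) (v ord0).
rewrite -/(enorm u) -/(enorm v); nra.
Qed.

End EuclideanNorm.

Lemma lebesgue_measure_bounded_itv_lty {R : realType} (b1 b2 : bool) (u v : R) :
  (lebesgue_measure [set` Interval (BSide b1 u) (BSide b2 v)] < +oo)%E.
Proof.
by rewrite lebesgue_measure_itv /=; case: ifP => _; rewrite ?ltry // -EFinD ltry.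
Qed.

Section Gdelta.
Context {R : realType} (p delta : R).
Implicit Types s u v : R.

Definition Gdelta_integrand s : R :=
  s * powR (s + delta) ((p - 2) / 2) / Num.sqrt (1 + delta + s ^+ 2).

Lemma Gdelta_integrand_bound {s v} : 2 <= p -> 0 <= delta -> 0 <= s -> s <= v ->
  0 <= Gdelta_integrand s <= powR (v + delta) ((p - 2) / 2).
Proof.
move=> p_ge2 delta_ge0 s_ge0 s_le_v.
have exponent_ge0 : 0 <= (p - 2) / 2 by rewrite divr_ge0 // subr_ge0.
have sqrt_gt0 : 0 < Num.sqrt (1 + delta + s ^+ 2).
  by rewrite sqrtr_gt0; have := sqr_ge0 s; lra.
have s_le_sqrt : s <= Num.sqrt (1 + delta + s ^+ 2).
  by rewrite -{1}(ger0_norm s_ge0) -sqrtr_sqr; apply: ler_wsqrtr; lra.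
have pow_le : powR (s + delta) ((p - 2) / 2) <= powR (v + delta) ((p - 2) / 2).
  by apply: ge0_ler_powR; rewrite ?nnegrE //; lra.
rewrite /Gdelta_integrand mulrAC; apply/andP; split.
  by rewrite mulr_ge0 ?powR_ge0 ?divr_ge0 // ltW.
apply: le_trans pow_le; rewrite ler_piMl ?powR_ge0 //.
by rewrite ler_pdivrMr // mul1r.
Qed.

Lemma measurable_Gdelta_integrand : 0 <= delta -> measurable_fun setT Gdelta_integrand.
Proof.
move=> delta_ge0.
have -> : Gdelta_integrand = fun s =>
    s * powR (s + delta) ((p - 2) / 2) * powR (1 + delta + s ^+ 2) (- 2^-1).
  by apply/funext => s; rewrite /Gdelta_integrand powRN powR12_sqrt //; nra.
apply: measurable_funM; first apply: measurable_funM => //.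
  apply: measurableT_comp (measurable_powR _) _.
  exact: measurable_funD.
apply: measurableT_comp (measurable_powR _) _.
by apply: measurable_funD => //; apply: measurable_funX.
Qed.

Lemma integrable_Gdelta_integrand v : 2 <= p -> 0 <= delta ->
  lebesgue_measure.-integrable `[0, v] (EFin \o Gdelta_integrand).
Proof.
move=> p_ge2 delta_ge0.
apply: measurable_bounded_integrable => //.
- exact: lebesgue_measure_bounded_itv_lty.
- exact: measurable_funS (measurable_Gdelta_integrand delta_ge0).
rewrite /bounded_near; near=> M => s /=; rewrite in_itv /= => /andP[s_ge0 s_le_v].
have /andP[g_ge0 g_le] := Gdelta_integrand_bound p_ge2 delta_ge0 s_ge0 s_le_v.
rewrite ger0_norm //; apply: le_trans g_le _.
by near: M; apply: nbhs_pinfty_ge; apply: num_real.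
Unshelve. all: by end_near.
Qed.

Lemma Gdelta_increment {u v} : 2 <= p -> 0 <= delta -> 0 <= u -> u <= v ->
  0 <= Gdelta p delta v - Gdelta p delta u <= (v - u) * powR (v + delta) ((p - 2) / 2).
Proof.
move=> p_ge2 delta_ge0 u_ge0 u_le_v.
have int_0v := integrable_Gdelta_integrand v p_ge2 delta_ge0.
rewrite /Gdelta -/Gdelta_integrand (Rintegral_itvB int_0v) ?bnd_simp //.
have int_uv : lebesgue_measure.-integrable `]u, v] (EFin \o Gdelta_integrand).
  apply: integrableS int_0v => // s /=.
  by rewrite !in_itv /= => /andP[? ->]; rewrite andbT; lra.
have g_bound s : `]u, v]%classic s ->
    0 <= Gdelta_integrand s <= powR (v + delta) ((p - 2) / 2).
  by rewrite /= in_itv /= => /andP[? ?]; apply: Gdelta_integrand_bound => //; lra.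
apply/andP; split; first by apply: Rintegral_ge0 => s /g_bound /andP[].
set M := powR (v + delta) _ in g_bound *.
have int_M : lebesgue_measure.-integrable `]u, v] (EFin \o cst M).
  apply: measurable_bounded_integrable => //.
    exact: lebesgue_measure_bounded_itv_lty.
  by rewrite /bounded_near; near=> K => s _ /=; near: K; apply: nbhs_pinfty_ge; apply: num_real.
apply: le_trans (le_Rintegral _ int_uv int_M _) _ => //.
  by move=> s /g_bound /andP[].
rewrite Rintegral_cst //.
have -> : fine (lebesgue_measure [set` Interval (BRight u) (BRight v)]) = v - u.
  by rewrite lebesgue_measure_itv /= lte_fin; case: ltP => //=; lra.
by rewrite mulrC.
Unshelve. all: by end_near.
Qed.

End Gdelta.

Lemma powR_increment_le {R : realType} (x y r : R) : 0 <= y -> y <= x -> 0 <= r ->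
  (x - y) * powR x r <= powR x (r + 1) - powR y (r + 1).
Proof.
move=> y_ge0 y_le_x r_ge0.
have r1_neq0 : (r + 1 == 0) = false by apply: gt_eqF; lra.
rewrite !powRD ?r1_neq0 ?powRr1 //; last lra.
have : powR y r <= powR x r by apply: ge0_ler_powR; rewrite ?nnegrE //; lra.
have := powR_ge0 y r; nra.
Qed.

Lemma le_pos_part {R : realType} (x y : R) : x <= y -> pos_part x <= pos_part y.
Proof. by move=> x_le_y; apply: le_max2. Qed.

Lemma pos_part_ge0 {R : realType} (x : R) : 0 <= pos_part x.
Proof. by rewrite /pos_part le_max lexx orbT. Qed.

Definition Hp2_radial {R : realType} (p a : R) : R := powR (pos_part (a - 1)) (p / 2).

Lemma Hp2_radial_le {R : realType} (p a b : R) : 0 <= p -> b <= a ->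
  Hp2_radial p b <= Hp2_radial p a.
Proof.
move=> p_ge0 b_le_a; apply: ge0_ler_powR; rewrite ?nnegrE ?pos_part_ge0 ?divr_ge0 //.
by apply: le_pos_part; lra.
Qed.

Lemma enorm_Hp2 {R : realType} {n : nat} {p : R} (xi : 'rV[R]_n) : 0 < p ->
  enorm (Hp2 p xi) = Hp2_radial p (enorm xi).
Proof.
move=> p_gt0.
have radial0 : Hp2_radial p 0 = 0.
  by rewrite /Hp2_radial /pos_part max_r ?powR0 //; lra.
rewrite /Hp2; case: eqP => [->|_]; first by rewrite enorm0 radial0.
rewrite enormZ ger0_norm ?divr_ge0 ?powR_ge0 ?enorm_ge0 //.
by have [->|/divfK->] := eqVneq (enorm xi) 0; rewrite ?mulr0 ?radial0.
Qed.

Lemma Gdelta_shifted_increment {R : realType} {p delta a b : R} :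
  2 <= p -> 0 <= delta -> b <= a ->
  0 <= Gdelta p delta (pos_part (a - delta - 1)) - Gdelta p delta (pos_part (b - delta - 1))
    <= Hp2_radial p a - Hp2_radial p b.
Proof.
move=> p_ge2 delta_ge0 b_le_a.
set ta := pos_part (a - delta - 1); set tb := pos_part (b - delta - 1).
have tb_ge0 : 0 <= tb := pos_part_ge0 _.
have tb_le_ta : tb <= ta by apply: le_pos_part; lra.
have radial_le : Hp2_radial p b <= Hp2_radial p a by apply: Hp2_radial_le; lra.
have [a_small | a_large] := leP (a - delta - 1) 0.
  have ta0 : ta = 0 by rewrite /ta /pos_part max_r.
  have tb0 : tb = 0 by apply/eqP; rewrite eq_le tb_ge0 -ta0 tb_le_ta.
  by rewrite ta0 tb0 subrr lexx subr_ge0.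
have ta_def : ta = a - delta - 1 by rewrite /ta /pos_part max_l // ltW.
have /andP[G_ge0 G_le] := Gdelta_increment p delta p_ge2 delta_ge0 tb_ge0 tb_le_ta.
apply/andP; split => //; apply: le_trans G_le _.
have exponent : p / 2 = (p - 2) / 2 + 1 by lra.
have radial_a : Hp2_radial p a = powR (ta + delta) (p / 2).
  by rewrite ta_def /Hp2_radial /pos_part max_l; [congr powR; lra | lra].
have radial_b : Hp2_radial p b <= powR (tb + delta) (p / 2).
  apply: ge0_ler_powR; rewrite ?nnegrE ?pos_part_ge0 ?divr_ge0 //; try lra.
  have tb_ge : b - delta - 1 <= tb by rewrite /tb /pos_part le_max lexx.
  by rewrite /pos_part ge_max; apply/andP; split; lra.
have pow_increment : (ta - tb) * powR (ta + delta) ((p - 2) / 2)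
    <= powR (ta + delta) (p / 2) - powR (tb + delta) (p / 2).
  rewrite exponent (_ : ta - tb = ta + delta - (tb + delta)); last by ring.
  by apply: powR_increment_le; lra.
lra.
Qed.

Lemma dist_Gdelta_shifted_le {R : realType} {p delta : R} (a b : R) : 2 <= p -> 0 <= delta ->
  `|Gdelta p delta (pos_part (a - delta - 1)) - Gdelta p delta (pos_part (b - delta - 1))|
    <= `|Hp2_radial p a - Hp2_radial p b|.
Proof.
move=> p_ge2 delta_ge0.
wlog b_le_a : a b / b <= a.
  move=> le_dist; have [/le_dist//|/ltW/le_dist] := leP b a.
  by rewrite distrC [X in _ <= X]distrC.
have /andP[G_ge0 G_le] := Gdelta_shifted_increment p_ge2 delta_ge0 b_le_a.
by rewrite !ger0_norm // (le_trans G_ge0 G_le).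
Qed.

Theorem mainTheorem4 (R : realType) (p : R) (hp : 2 <= p) :
  exists c : R, 0 < c /\
    forall (delta : R), 0 < delta ->
    forall (n : nat) (xi eta : 'rV[R]_n),
      `| Gdelta p delta (pos_part (enorm xi - delta - 1))
         - Gdelta p delta (pos_part (enorm eta - delta - 1)) | ^+ 2
      <= c * enorm (Hp2 p xi - Hp2 p eta) ^+ 2.
Proof.
exists 1; split => // delta delta_gt0 n xi eta; rewrite mul1r.
have p_gt0 : 0 < p by lra.
rewrite ler_sqr ?nnegrE ?enorm_ge0 //.
apply: le_trans (dist_Gdelta_shifted_le _ _ hp (ltW delta_gt0)) _.
by rewrite -!(enorm_Hp2 _ p_gt0) ler_dist_enorm.
Qed.
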